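(* Let $(a(n))_{n\in\mathbb N_0}$ be a real sequence and for $\lambda>0$ let $N_\lambda$ be Poisson distributed with mean $\lambda$. If $a(n+1)-a(n)=O(\sqrt n)$ as $n\to\infty$, then $|a(n)-\mathbb E[a(N_n)]|=O(n)$ as $n\to\infty$. *)

From Stdlib Require Import Reals.
From Coquelicot Require Import Coquelicot.
Open Scope R_scope.

Definition poisson_pmf (lam : R) (k : nat) : R :=
  exp (- lam) * lam ^ k / INR (Factorial.fact k).

Definition poisson_terms (a : nat -> R) (lam : R) (k : nat) : R :=
  a k * poisson_pmf lam k.

Definition poisson_expect (a : nat -> R) (lam : R) : R :=
  Series (poisson_terms a lam).

(* Increments of size O(sqrt n) give |a(n) - a(k)| <= D ((n - k)^2 + n + k) for all n, k,
   since d steps near n cost at most d sqrt(n + d) <= d^2 + n + d.  Both the absolute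
   convergence of E[a(N_l)] and the estimate then follow from the first two moments of the
   Poisson law, E[N_l] = l and E[N_l^2] = l^2 + l: with l = n the quadratic bound
   integrates to D (l + l + l) = 3 D n. *)

From Stdlib Require Import Reals Lra Lia.
From Coquelicot Require Import Coquelicot.
Open Scope R_scope.

Lemma is_series_exp (x : R) :
  is_series (fun k => x ^ k / INR (Factorial.fact k)) (exp x).
Proof.
  eapply is_series_ext; [| exact (is_exp_Reals x)].
  intros k. unfold scal; simpl. unfold mult; simpl. rewrite pow_n_pow. unfold Rdiv. ring.
Qed.

Lemma poisson_pmf_ge0 (l : R) (k : nat) : 0 <= l -> 0 <= poisson_pmf l k.
Proof.
  intros Hl. unfold poisson_pmf, Rdiv.
  apply Rmult_le_pos; [apply Rmult_le_pos |].
  - left; apply exp_pos.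
  - apply pow_le; exact Hl.
  - left; apply Rinv_0_lt_compat, INR_fact_lt_0.
Qed.

Lemma poisson_pmf_succ (l : R) (k : nat) :
  INR (S k) * poisson_pmf l (S k) = l * poisson_pmf l k.
Proof.
  unfold poisson_pmf.
  change (Factorial.fact (S k)) with (S k * Factorial.fact k)%nat.
  rewrite mult_INR. simpl pow.
  assert (INR (Factorial.fact k) <> 0) by apply INR_fact_neq_0.
  assert (INR (S k) <> 0) by (apply not_0_INR; lia).
  field. auto.
Qed.

Lemma is_series_poisson_pmf (l : R) : is_series (poisson_pmf l) 1.
Proof.
  replace 1 with (scal (exp (- l)) (exp l)).
  2: { unfold scal; simpl. unfold mult; simpl. rewrite <- exp_plus, Rplus_opp_l. apply exp_0. }
  eapply is_series_ext; [| exact (is_series_scal _ _ _ (is_series_exp l))].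
  intros k. unfold scal; simpl. unfold mult; simpl. unfold poisson_pmf, Rdiv. ring.
Qed.

(* The moment identities come from shifting the index with [poisson_pmf_succ]. *)
Lemma is_series_poisson_mean (l : R) :
  is_series (fun k => INR k * poisson_pmf l k) l.
Proof.
  apply is_series_decr_1.
  match goal with |- is_series _ ?v => replace v with (scal l 1) end.
  2: { unfold scal, plus, opp; simpl. unfold mult, plus, opp; simpl. ring. }
  eapply is_series_ext; [| exact (is_series_scal _ _ _ (is_series_poisson_pmf l))].
  intros k. symmetry. apply poisson_pmf_succ.
Qed.

Lemma is_series_poisson_second_moment (l : R) :
  is_series (fun k => INR k * INR k * poisson_pmf l k) (l * l + l).
Proof.
  apply is_series_decr_1.
  match goal with |- is_series _ ?v => replace v with (scal l (plus l 1)) end.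
  2: { unfold scal, plus, opp; simpl. unfold mult, plus, opp; simpl. ring. }
  eapply is_series_ext;
    [| exact (is_series_scal _ _ _ (is_series_plus _ _ _ _ (is_series_poisson_mean l)
                                                         (is_series_poisson_pmf l)))].
  intros k. cbv beta. rewrite Rmult_assoc, poisson_pmf_succ, S_INR.
  unfold scal, plus; simpl. unfold mult, plus; simpl. ring.
Qed.

Lemma is_series_poisson_quadratic (l al be ga : R) :
  is_series (fun k => (al + be * INR k + ga * (INR k * INR k)) * poisson_pmf l k)
            (al + be * l + ga * (l * l + l)).
Proof.
  pose proof (is_series_plus _ _ _ _
    (is_series_plus _ _ _ _ (is_series_scal al _ _ (is_series_poisson_pmf l))
                            (is_series_scal be _ _ (is_series_poisson_mean l)))
    (is_series_scal ga _ _ (is_series_poisson_second_moment l))) as H.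
  unfold scal, plus in H; simpl in H. unfold mult, plus in H; simpl in H.
  rewrite Rmult_1_r in H.
  eapply is_series_ext; [| exact H]. intros k; simpl. ring.
Qed.

Lemma poisson_average_quadratic_bound (f : nat -> R) (l al be ga : R) :
  0 <= l ->
  (forall k, Rabs (f k) <= al + be * INR k + ga * (INR k * INR k)) ->
  ex_series (fun k => Rabs (f k * poisson_pmf l k)) /\
  Rabs (Series (fun k => f k * poisson_pmf l k)) <= al + be * l + ga * (l * l + l).
Proof.
  intros Hl Hf.
  set (g := fun k => (al + be * INR k + ga * (INR k * INR k)) * poisson_pmf l k).
  assert (Hg : is_series g (al + be * l + ga * (l * l + l)))
    by apply is_series_poisson_quadratic.
  assert (Hdom : forall k, 0 <= Rabs (f k * poisson_pmf l k) <= g k).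
  { intros k. split; [apply Rabs_pos |].
    pose proof (poisson_pmf_ge0 l k Hl) as Hp.
    rewrite Rabs_mult, (Rabs_pos_eq _ Hp).
    apply Rmult_le_compat_r; [exact Hp | apply Hf]. }
  assert (Habs : ex_series (fun k => Rabs (f k * poisson_pmf l k))).
  { apply (ex_series_le (K := R_AbsRing) (V := R_CompleteNormedModule) _ g).
    - intros k. unfold norm; simpl. unfold abs; simpl. rewrite Rabs_Rabsolu. apply Hdom.
    - eexists; exact Hg. }
  split; [exact Habs |].
  eapply Rle_trans; [exact (Series_Rabs _ Habs) |].
  rewrite <- (is_series_unique _ _ Hg).
  apply Series_le; [exact Hdom | eexists; exact Hg].
Qed.

Lemma Series_const_sub_poisson (c : R) (a : nat -> R) (l : R) :
  ex_series (poisson_terms a l) ->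
  Series (fun k => (c - a k) * poisson_pmf l k) = c - poisson_expect a l.
Proof.
  intros Hex.
  pose proof (is_series_minus _ _ _ _ (is_series_scal c _ _ (is_series_poisson_pmf l))
                (Series_correct _ Hex)) as Hdiff.
  match type of Hdiff with is_series _ ?v =>
    replace v with (c - poisson_expect a l) in Hdiff end.
  2: { unfold poisson_expect, scal, plus, opp; simpl.
       unfold mult, plus, opp; simpl. ring. }
  apply is_series_unique. eapply is_series_ext; [| exact Hdiff].
  intros k. unfold poisson_terms, scal, plus, opp; simpl.
  unfold mult, plus, opp; simpl. ring.
Qed.

Lemma finite_prefix_bounded (u : nat -> R) (N : nat) :
  exists B, 0 <= B /\ forall m, (m < N)%nat -> Rabs (u m) <= B.
Proof.
  induction N as [| N [B [HB IH]]].
  - exists 0. split; [lra | intros m Hm; lia].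
  - exists (B + Rabs (u N)). pose proof (Rabs_pos (u N)). split; [lra |].
    intros m Hm. destruct (Nat.eq_dec m N) as [-> | Hne]; [lra |].
    pose proof (IH m ltac:(lia)). lra.
Qed.

Lemma sqrt_INR_le_succ (n : nat) : sqrt (INR n) <= sqrt (INR (S n)).
Proof. apply sqrt_le_1_alt. rewrite S_INR. lra. Qed.

(* Shifting to sqrt (n + 1) makes the bound valid for every n, including n = 0. *)
Lemma increments_bounded_by_sqrt_succ (a : nat -> R) :
  (exists (C : R) (N0 : nat), forall n : nat, (N0 <= n)%nat ->
     Rabs (a (S n) - a n) <= C * sqrt (INR n)) ->
  exists D, 0 <= D /\ forall m, Rabs (a (S m) - a m) <= D * sqrt (INR (S m)).
Proof.
  intros [C [N0 HC]].
  destruct (finite_prefix_bounded (fun m => a (S m) - a m) N0) as [B [HB Hprefix]].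
  exists (Rabs C + B). pose proof (Rabs_pos C). split; [lra |].
  intros m.
  assert (1 <= sqrt (INR (S m))).
  { rewrite <- sqrt_1. apply sqrt_le_1_alt. rewrite S_INR. pose proof (pos_INR m). lra. }
  pose proof (sqrt_INR_le_succ m). pose proof (sqrt_pos (INR m)). pose proof (Rle_abs C).
  destruct (Nat.lt_ge_cases m N0) as [Hlt | Hge].
  - pose proof (Hprefix m Hlt). nra.
  - pose proof (HC m Hge). nra.
Qed.

Lemma mul_sqrt_le (x y : R) : 0 <= x -> 0 <= y -> x * sqrt y <= x * x + y.
Proof. intros Hx Hy. pose proof (sqrt_sqrt y Hy). pose proof (sqrt_pos y). nra. Qed.

Section SqrtIncrements.

Variables (a : nat -> R) (D : R).
Hypothesis D_ge0 : 0 <= D.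
Hypothesis increment_bound : forall m, Rabs (a (S m) - a m) <= D * sqrt (INR (S m)).

Lemma abs_sub_shift_le (k d : nat) :
  Rabs (a (k + d)%nat - a k) <= D * INR d * sqrt (INR (k + d)).
Proof.
  induction d as [| d IH].
  - rewrite Nat.add_0_r, Rminus_diag, Rabs_R0. simpl. lra.
  - rewrite Nat.add_succ_r, S_INR.
    pose proof (Rabs_triang (a (S (k + d)) - a (k + d)%nat) (a (k + d)%nat - a k)).
    replace (a (S (k + d)) - a (k + d)%nat + (a (k + d)%nat - a k))
      with (a (S (k + d)) - a k) in * by ring.
    pose proof (increment_bound (k + d)).
    pose proof (sqrt_INR_le_succ (k + d)). pose proof (sqrt_pos (INR (k + d))).
    assert (0 <= D * INR d) by (apply Rmult_le_pos; [exact D_ge0 | apply pos_INR]).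
    nra.
Qed.

Lemma abs_sub_le_quadratic (n k : nat) :
  Rabs (a n - a k) <= D * ((INR n - INR k) * (INR n - INR k) + INR n + INR k).
Proof.
  cut (forall n k, (k <= n)%nat ->
         Rabs (a n - a k) <= D * ((INR n - INR k) * (INR n - INR k) + INR n + INR k)).
  { intros Hle. destruct (Nat.le_ge_cases k n) as [Hkn | Hnk]; [auto |].
    rewrite Rabs_minus_sym. pose proof (Hle k n Hnk). nra. }
  clear n k. intros n k Hkn.
  destruct (Nat.le_exists_sub k n Hkn) as [d [-> _]]. rewrite Nat.add_comm.
  pose proof (abs_sub_shift_le k d). rewrite plus_INR in *.
  pose proof (pos_INR k). pose proof (pos_INR d).
  pose proof (mul_sqrt_le (INR d) (INR k + INR d) ltac:(lra) ltac:(lra)).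
  nra.
Qed.

End SqrtIncrements.

Theorem lemma6p8 (a : nat -> R)
  (Ha : exists (C : R) (N0 : nat), forall n : nat, (N0 <= n)%nat ->
          Rabs (a (S n) - a n) <= C * sqrt (INR n)) :
  (forall lam : R, 0 < lam ->
     ex_series (fun k => Rabs (poisson_terms a lam k))) /\
  exists (C : R) (N0 : nat), forall n : nat, (N0 <= n)%nat ->
    Rabs (a n - poisson_expect a (INR n)) <= C * INR n.
Proof.
  destruct (increments_bounded_by_sqrt_succ a Ha) as [D [HD Hinc]].
  pose proof (abs_sub_le_quadratic a D HD Hinc) as Hquad.
  assert (Ha_quad : forall k, Rabs (a k) <= Rabs (a 0%nat) + D * INR k + D * (INR k * INR k)).
  { intros k. pose proof (Rabs_triang_inv (a k) (a 0%nat)). pose proof (Hquad k 0%nat).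
    simpl INR in *. nra. }
  assert (Hexpect : forall lam, 0 <= lam ->
            ex_series (fun k => Rabs (poisson_terms a lam k))).
  { intros lam Hl. apply (poisson_average_quadratic_bound a lam _ _ _ Hl Ha_quad). }
  split; [intros lam Hl; apply Hexpect; lra |].
  exists (3 * D), 0%nat. intros n _. set (l := INR n). pose proof (pos_INR n) as Hl.
  assert (Hdev : forall k, Rabs (a n - a k)
                   <= D * (l * l + l) + D * (1 - 2 * l) * INR k + D * (INR k * INR k)).
  { intros k. pose proof (Hquad n k) as Hnk. fold l in Hnk. nra. }
  destruct (poisson_average_quadratic_bound (fun k => a n - a k) l _ _ _ Hl Hdev)
    as [_ Hbound].
  rewrite <- (Series_const_sub_poisson (a n) a l); [| apply ex_series_Rabs, Hexpect, Hl].
  eapply Rle_trans; [exact Hbound | lra].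
Qed.
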